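(* For every number of items $m\ge 3$, the class GS of valuations with the gross substitutes property on a set $X$ of $m$ items, viewed as a subset of $\mathbb{R}^{2^m-1}$ (via the coordinates $v(S)$, $\emptyset\ne S\subseteq X$), has Lebesgue measure zero; in particular its interior is empty.
   Context: A valuation on a finite set $X$ is a function $v:2^X\to\mathbb{R}_{\ge 0}$ with $v(\emptyset)=0$ and $v(A)\le v(B)$ whenever $A\subseteq B$. For a price vector $\vec p=(p_x)_{x\in X}$ of reals, $v(S\mid\vec p)=v(S)-\sum_{x\in S}p_x$, and the demand set $D(v\mid\vec p)$ is the family of sets $S\subseteq X$ maximizing $v(S\mid\vec p)$. A valuation $v$ has the gross substitutes property if for every item $i$, every price vector $\vec p$ and every price vector $\vec q\ge\vec p$ (coordinatewise) with $q_i=p_i$, whenever $i\in A$ for some $A\in D(v\mid\vec p)$ there exists $A'\in D(v\mid\vec q)$ with $i\in A'$. *)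

From mathcomp Require Import all_boot all_order all_algebra.
From mathcomp Require Import reals.
Set Implicit Arguments. Unset Strict Implicit. Unset Printing Implicit Defensive.
Import Order.TTheory GRing.Theory Num.Theory.
Local Open Scope ring_scope.

Section GS.
Variable R : realType.
Variable m : nat.

Definition is_valuation (v : {set 'I_m} -> R) : Prop :=
  v set0 = 0 /\ (forall S, 0 <= v S) /\
  (forall A B : {set 'I_m}, A \subset B -> v A <= v B).

Definition util (v : {set 'I_m} -> R) (p : 'I_m -> R) (S : {set 'I_m}) : R :=
  v S - \sum_(x in S) p x.

Definition in_demand (v : {set 'I_m} -> R) (p : 'I_m -> R) (S : {set 'I_m}) : Prop :=
  forall T : {set 'I_m}, util v p T <= util v p S.

Definition gross_substitutes (v : {set 'I_m} -> R) : Prop :=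
  forall (i : 'I_m) (p q : 'I_m -> R),
    (forall x, p x <= q x) -> q i = p i ->
    (exists A, in_demand v p A /\ i \in A) ->
    exists A', in_demand v q A' /\ i \in A'.

(* Coordinates of R^{2^m - 1}: the nonempty subsets of X. *)
Definition coord := {S : {set 'I_m} | S != set0}.

(* The set function determined by a point x of R^{2^m-1}, with v(emptyset)=0. *)
Definition val_of (x : coord -> R) (S : {set 'I_m}) : R :=
  match insub S with Some s => x s | None => 0 end.

Definition GS_class (x : coord -> R) : Prop :=
  is_valuation (val_of x) /\ gross_substitutes (val_of x).

Definition lebesgue_null (A : (coord -> R) -> Prop) : Prop :=
  forall eps : R, 0 < eps ->
    exists a b : nat -> coord -> R,
      (forall k c, a k c <= b k c) /\
      (forall x, A x -> exists k, forall c, a k c <= x c <= b k c) /\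
      (forall N, \sum_(k < N) \prod_(c : coord) (b k c - a k c) <= eps).

(* Empty interior (Euclidean topology; sup-norm balls generate it). *)
Definition empty_interior (A : (coord -> R) -> Prop) : Prop :=
  forall x, A x -> forall e : R, 0 < e ->
    exists y, (forall c, `|y c - x c| < e) /\ ~ A y.

End GS.

(* Fix distinct items a, b, c.  For a gross substitutes valuation the largest of
   the three split values v(ab) + v(c), v(ac) + v(b), v(bc) + v(a) is attained
   twice.  Otherwise, say v(ab) + v(c) is strictly largest: at prices making {a,b},
   {b} and {b,c} equally good, some demanded bundle contains a; raising the price
   of b keeps a demanded, so {a} or {a,c} is demanded, yet each is strictly worse
   than {c}.
   Hence GS lies in a union of three hyperplanes in the coordinates v(S).  Each is
   the graph of a Lipschitz function of the other coordinates, so grids of boxes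
   cover it with arbitrarily small total volume.  And raising the pair coordinate
   of a maximal split by any e > 0 makes that split strictly largest, so GS
   contains no ball. *)

From Pilot Require Import Defs.
From mathcomp Require Import all_boot all_order all_algebra.
From mathcomp Require Import reals.
From mathcomp Require boolp.
From mathcomp Require Import ring lra.
Set Implicit Arguments. Unset Strict Implicit. Unset Printing Implicit Defensive.
Import Order.TTheory GRing.Theory Num.Theory.
Local Open Scope ring_scope.

Section ThreeReals.
Variable R : realDomainType.
Implicit Types x y z : R.

Lemma no_strict_max_tie x y z :
  (y < x -> z < x -> False) -> (x < y -> z < y -> False) ->
  (x < z -> y < z -> False) -> [\/ x = y, x = z | y = z].
Proof.
move=> maxx maxy maxz.
case: (ltgtP x y) => [xy | yx | ->]; last by constructor 1.
- case: (ltgtP y z) => [yz | zy | ->]; last by constructor 3.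
  + by case: (maxz (lt_trans xy yz) yz).
  + by case: (maxy xy zy).
- case: (ltgtP x z) => [xz | zx | ->]; last by constructor 2.
  + by case: (maxz xz (lt_trans yx xz)).
  + by case: (maxx yx zx).
Qed.

Lemma max3_cases x y z :
  [\/ y <= x /\ z <= x, x <= y /\ z <= y | x <= z /\ y <= z].
Proof.
have [yx | xy] := lerP y x; have [zx | xz] := lerP z x; have [zy | yz] := lerP z y;
  first [by constructor 1; split; lra | by constructor 2; split; lra
        | by constructor 3; split; lra].
Qed.

End ThreeReals.

Lemma subset_set2_cases (T : finType) (x y : T) (A : {set T}) :
  A \subset [set x; y] -> x \in A -> A = [set x] \/ A = [set x; y].
Proof.
move=> sA xA; case yA: (y \in A); [right | left]; apply/eqP; rewrite eqEsubset.
  by rewrite sA subUset !sub1set xA yA.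
rewrite sub1set xA andbT; apply/subsetP => z zA.
move/subsetP: sA => /(_ z zA); rewrite !inE => /orP [// | /eqP zy].
by move: yA; rewrite -zy zA.
Qed.

Section GrossSubstitutes.
Variables (R : realType) (m : nat).
Implicit Types (v : {set 'I_m} -> R) (p : 'I_m -> R).

Definition pair_sum v (a b c : 'I_m) : R := v [set a; b] + v [set c].

Lemma pair_sumC v a b c : pair_sum v b a c = pair_sum v a b c.
Proof. by rewrite /pair_sum setUC. Qed.

Lemma util_set1 v p a : util v p [set a] = v [set a] - p a.
Proof. by rewrite /util big_set1. Qed.

Lemma util_set2 v p a b :
  a != b -> util v p [set a; b] = v [set a; b] - (p a + p b).
Proof. by move=> ab; rewrite /util big_setU1 ?inE // big_set1. Qed.

Lemma exists_in_demand v p : exists D, in_demand v p D.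
Proof.
have [D _ D_max] := @arg_maxP _ _ _ set0 xpredT (util v p) isT.
by exists D => T; apply: D_max.
Qed.

Section Demand.
Variable v : {set 'I_m} -> R.
Hypothesis v_val : is_valuation v.

Lemma in_demand_subset p D (P : {set 'I_m}) :
  (forall y, 0 <= p y) -> (forall x, x \notin P -> v setT < p x) ->
  in_demand v p D -> D \subset P.
Proof.
case: v_val => v0 [_ v_mono] p_ge0 p_big D_dem; apply/subsetP => x xD.
apply: contraT => /p_big ltx; exfalso.
have := D_dem set0; rewrite /util big_set0 v0 subr0 (bigD1 x) //=.
have : v D <= v setT := v_mono _ _ (subsetT D).
have : 0 <= \sum_(y in D | y != x) p y by apply: sumr_ge0.
lra.
Qed.

Lemma in_demand_setU1 p D b :
  p b = 0 -> in_demand v p D -> in_demand v p (b |: D).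
Proof.
case: v_val => _ [_ v_mono] pb0 D_dem T; apply: le_trans (D_dem T) _.
rewrite /util; case: (boolP (b \in D)) => bD.
  by rewrite (setUidPr _) ?sub1set.
by rewrite big_setU1 //= pb0 add0r lerD2r; apply: v_mono; apply: subsetUr.
Qed.

Section ThreeItems.
Variables a b c : 'I_m.
Hypotheses (ab : a != b) (ac : a != c) (bc : b != c).

Let ba : (b == a) = false. Proof. by rewrite eq_sym (negbTE ab). Qed.
Let ca : (c == a) = false. Proof. by rewrite eq_sym (negbTE ac). Qed.
Let cb : (c == b) = false. Proof. by rewrite eq_sym (negbTE bc). Qed.
Let top_ge0 : 0 <= v setT. Proof. by case: v_val => _ []. Qed.

(* At these prices {a,b}, {b} and {b,c} all have utility v{b}, and every item
   outside {a,b,c} costs more than any bundle is worth. *)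
Definition probe_price x : R :=
  if x == a then v [set a; b] - v [set b] else if x == b then 0
  else if x == c then v [set b; c] - v [set b] else v setT + 1.

Definition raised_price x : R := if x == b then v setT + 1 else probe_price x.

Lemma probe_price_ge0 x : 0 <= probe_price x.
Proof.
case: v_val => _ [_ v_mono]; rewrite /probe_price; have := top_ge0.
have : v [set b] <= v [set a; b] by apply: v_mono; rewrite sub1set !inE eqxx orbT.
have : v [set b] <= v [set b; c] by apply: v_mono; rewrite sub1set !inE eqxx.
by case: ifP => _; [lra | case: ifP => _; [lra | case: ifP => _; lra]].
Qed.

Lemma raised_price_ge0 x : 0 <= raised_price x.
Proof.
rewrite /raised_price; case: ifP => _; last exact: probe_price_ge0.
by have := top_ge0; lra.
Qed.

Lemma probe_price_demand_mem : exists2 A, in_demand v probe_price A & a \in A.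
Proof.
have pb : probe_price b = 0 by rewrite /probe_price ba eqxx.
have [D D_dem] := exists_in_demand v probe_price.
have D'_dem := in_demand_setU1 pb D_dem; set D' := b |: D in D'_dem.
case aD': (a \in D'); first by exists D'.
have sD' : D' \subset [set a; b; c].
  apply: in_demand_subset probe_price_ge0 _ D'_dem => x.
  rewrite !inE /probe_price => /norP [/norP [/negbTE -> /negbTE ->] /negbTE ->].
  by have := top_ge0; lra.
have {}sD' : D' \subset [set b; c].
  apply/subsetP => z zD'; move/subsetP: sD' => /(_ z zD').
  rewrite !inE => /orP [/orP [/eqP za | ->] | ->]; rewrite ?orbT //.
  by move: zD'; rewrite za aD'.
exists [set a; b]; last by rewrite setU11.
move=> T; apply: le_trans (D'_dem T) _.
rewrite util_set2 // pb /probe_price eqxx.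
have [-> | ->] := subset_set2_cases sD' (setU11 b D);
  [rewrite util_set1 | rewrite util_set2 //]; rewrite /probe_price ba ?ca ?cb !eqxx; lra.
Qed.

Lemma gross_substitutes_split_not_strict_max : gross_substitutes v ->
  pair_sum v a c b < pair_sum v a b c -> pair_sum v b c a < pair_sum v a b c ->
  False.
Proof.
rewrite /pair_sum => gs lt_acb lt_bca.
have [A A_dem aA] := probe_price_demand_mem.
have probe_le_raised x : probe_price x <= raised_price x.
  rewrite /raised_price; case: eqP => [-> | _] //.
  by rewrite /probe_price ba eqxx; have := top_ge0; lra.
have raised_a : raised_price a = probe_price a by rewrite /raised_price (negbTE ab).
have [A' [A'_dem aA']] :=
  gs a _ _ probe_le_raised raised_a (ex_intro _ A (conj A_dem aA)).
have sA' : A' \subset [set a; c].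
  apply: in_demand_subset raised_price_ge0 _ A'_dem => x.
  rewrite !inE /raised_price /probe_price => /norP [/negbTE -> /negbTE ->].
  by have := top_ge0; case: ifP => [_ | ->]; lra.
have := A'_dem [set c]; rewrite util_set1.
have [-> | ->] := subset_set2_cases sA' aA';
  [rewrite util_set1 | rewrite util_set2 //];
  rewrite /raised_price /probe_price ?ca ?cb (negbTE ab) !eqxx; lra.
Qed.

End ThreeItems.

Lemma gross_substitutes_split_tie a b c :
  gross_substitutes v -> a != b -> a != c -> b != c ->
  [\/ pair_sum v a b c = pair_sum v a c b, pair_sum v a b c = pair_sum v b c a
    | pair_sum v a c b = pair_sum v b c a].
Proof.
move=> gs ab ac bc; have cb : c != b by rewrite eq_sym.
have ba : b != a by rewrite eq_sym.
have ca : c != a by rewrite eq_sym.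
apply: no_strict_max_tie.
- exact: gross_substitutes_split_not_strict_max ab ac bc gs.
- rewrite -(pair_sumC v b c a); exact: gross_substitutes_split_not_strict_max ac ab cb gs.
- rewrite -(pair_sumC v a b c) -(pair_sumC v a c b).
  exact: gross_substitutes_split_not_strict_max bc ba ca gs.
Qed.

End Demand.
End GrossSubstitutes.

Lemma ler_sum_uniq_sub (R : numDomainType) (I : eqType) (s s' : seq I) (F : I -> R) :
  uniq s -> uniq s' -> {subset s <= s'} -> (forall i, 0 <= F i) ->
  \sum_(i <- s) F i <= \sum_(i <- s') F i.
Proof.
move=> us us' ss' F_ge0; rewrite [leRHS](bigID (mem s)) /=.
have -> : \sum_(i <- s' | i \in s) F i = \sum_(i <- s) F i.
  rewrite -big_filter; apply/perm_big/uniq_perm; rewrite ?filter_uniq // => i.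
  by rewrite mem_filter andb_idr //; apply: ss'.
by rewrite lerDl sumr_ge0.
Qed.

Lemma sum_geometric_half_le (R : numFieldType) (eps : R) N :
  0 <= eps -> \sum_(n < N) eps / 2 ^+ n.+1 <= eps.
Proof.
move=> eps_ge0.
suff -> : \sum_(n < N) eps / 2 ^+ n.+1 = eps - eps / 2 ^+ N.
  by rewrite lerBlDr lerDl divr_ge0 ?exprn_ge0.
elim: N => [|N IH]; first by rewrite big_ord0 expr0 divr1 subrr.
have two_neq0 : (2 : R) != 0 by rewrite pnatr_eq0.
have twoN_neq0 : (2 : R) ^+ N != 0 by rewrite expf_neq0.
by rewrite big_ord_recr /= IH exprS; field.
Qed.

Section BoxNull.
Variables (R : realType) (C : finType).
Implicit Types (A B : (C -> R) -> Prop) (lo hi : C -> R).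

Definition box_vol lo hi : R := \prod_c (hi c - lo c).

Definition box_null A : Prop :=
  forall eps : R, 0 < eps ->
    exists a b : nat -> C -> R,
      (forall k c, a k c <= b k c) /\
      (forall x, A x -> exists k, forall c, a k c <= x c <= b k c) /\
      (forall N, \sum_(k < N) box_vol (a k) (b k) <= eps).

Lemma box_vol_ge0 lo hi : (forall c, lo c <= hi c) -> 0 <= box_vol lo hi.
Proof. by move=> lo_hi; apply: prodr_ge0 => c _; rewrite subr_ge0. Qed.

Lemma box_null_sub A B : (forall x, A x -> B x) -> box_null B -> box_null A.
Proof.
move=> AB nullB eps /nullB [a [b [ab [covB vol_le]]]].
by exists a, b; split=> //; split=> // x /AB /covB.
Qed.

Section Inhabited.
(* Padding boxes [fun=> 0] have volume 0 only when [C] is nonempty. *)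
Variable c0 : C.

Lemma box_null_countable_cover A :
  (forall eps, 0 < eps -> exists (I : countType) (a b : I -> C -> R),
     [/\ forall i c, a i c <= b i c,
         forall x, A x -> exists i, forall c, a i c <= x c <= b i c
       & forall s, uniq s -> \sum_(i <- s) box_vol (a i) (b i) <= eps]) ->
  box_null A.
Proof.
move=> cover eps /cover [I [a [b [ab covA vol_le]]]].
pose a' k := if pickle_inv k is Some i then a i else fun=> 0.
pose b' k := if pickle_inv k is Some i then b i else fun=> 0.
exists a', b'; split; [|split].
- by move=> k c; rewrite /a' /b'; case: pickle_inv.
- by move=> x /covA [i xi]; exists (pickle i); rewrite /a' /b' pickleK_inv.
move=> N.
have vol_pickle k :
    box_vol (a' k) (b' k) = oapp (fun i => box_vol (a i) (b i)) 0 (pickle_inv k).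
  rewrite /a' /b'; case: pickle_inv => //=.
  by rewrite /box_vol (bigD1 c0) //= subrr mul0r.
under eq_bigr do rewrite vol_pickle.
rewrite -(big_mkord xpredT (fun k => oapp _ 0 (pickle_inv k))) -big_pmap.
by apply/vol_le/(pmap_uniq (@pickle_invK I))/iota_uniq.
Qed.

Lemma box_null_finite_cover A :
  (forall eps, 0 < eps -> exists (I : finType) (a b : I -> C -> R),
     [/\ forall i c, a i c <= b i c,
         forall x, A x -> exists i, forall c, a i c <= x c <= b i c
       & \sum_i box_vol (a i) (b i) <= eps]) ->
  box_null A.
Proof.
move=> cover; apply: box_null_countable_cover => eps /cover [I [a [b [ab covA vol_le]]]].
exists I, a, b; split=> // s us; apply: le_trans vol_le.
apply: ler_sum_uniq_sub us (index_enum_uniq I) _ _ => [i _ | i].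
  by rewrite mem_index_enum.
exact: box_vol_ge0.
Qed.

Lemma box_null_bigcup (A : nat -> (C -> R) -> Prop) :
  (forall n, box_null (A n)) -> box_null (fun x => exists n, A n x).
Proof.
move=> nullA; apply: box_null_countable_cover => eps eps_gt0.
have /boolp.choice [ab cover] : forall n, exists ab : (nat -> C -> R) * (nat -> C -> R),
    [/\ forall k c, ab.1 k c <= ab.2 k c,
        forall x, A n x -> exists k, forall c, ab.1 k c <= x c <= ab.2 k c
      & forall N, \sum_(k < N) box_vol (ab.1 k) (ab.2 k) <= eps / 2 ^+ n.+1].
  move=> n; have [|a [b [ab [covA vol_le]]]] := nullA n (eps / 2 ^+ n.+1).
    by rewrite divr_gt0 ?exprn_gt0.
  by exists (a, b).
exists (nat * nat)%type, (fun t => (ab t.1).1 t.2), (fun t => (ab t.1).2 t.2); split.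
- by move=> [n k] c; have [ab_le _ _] := cover n.
- move=> x [n xn]; have [_ covA _] := cover n.
  by have [k xk] := covA x xn; exists (n, k).
move=> s us.
pose N := (\max_(t <- s) maxn t.1 t.2).+1.
pose grid := [seq (n, k) | n <- index_iota 0 N, k <- index_iota 0 N].
have grid_uniq : uniq grid.
  by apply: allpairs_uniq => [||[? ?] [? ?] _ _ [-> ->]] //; apply: iota_uniq.
have s_grid : {subset s <= grid}.
  move=> [n k] nk; have := @leq_bigmax_seq _ s xpredT (fun t => maxn t.1 t.2) _ nk isT.
  rewrite -ltnS => /= lt_nkN; apply: allpairs_f; rewrite mem_index_iota /=.
    exact: leq_ltn_trans (leq_maxl n k) lt_nkN.
  exact: leq_ltn_trans (leq_maxr n k) lt_nkN.
apply: le_trans (ler_sum_uniq_sub us grid_uniq s_grid _) _ => [[n k] | ].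
  by have [ab_le _ _] := cover n; apply: box_vol_ge0.
rewrite big_allpairs; apply: le_trans (sum_geometric_half_le N (ltW eps_gt0)).
rewrite -(big_mkord xpredT (fun n => eps / 2 ^+ n.+1)).
apply: ler_sum => n _; have [_ _ vol_le] := cover n.
by rewrite (big_mkord xpredT (fun k => box_vol _ _)).
Qed.

Lemma box_null_setU A B : box_null A -> box_null B -> box_null (fun x => A x \/ B x).
Proof.
move=> nullA nullB.
apply: box_null_sub (box_null_bigcup (A := fun n => if n is 0 then A else B) _).
  by move=> x [Ax | Bx]; [exists 0 | exists 1].
by case.
Qed.

End Inhabited.

Lemma exists_nat_norm_bound (x : C -> R) : exists n : nat, forall k, `|x k| <= n.+1%:R.
Proof.
have S_ge0 : 0 <= \sum_k `|x k| by apply: sumr_ge0.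
exists (Num.bound (\sum_k `|x k|)) => k.
have : `|x k| <= \sum_k `|x k| by rewrite (bigD1 k) //= lerDl sumr_ge0.
have := archi_boundP S_ge0.
have : (Num.bound (\sum_k `|x k|))%:R <= (Num.bound (\sum_k `|x k|)).+1%:R :> R.
  by rewrite ler_nat.
lra.
Qed.

Definition grid_step (L : R) (N : nat) : R := 2 * L / N%:R.

Definition grid_corner L N (g : {ffun C -> 'I_N}) k : R :=
  - L + (g k)%:R * grid_step L N.

Lemma exists_unit_cell (N : nat) (u : R) :
  (0 < N)%N -> 0 <= u <= N%:R -> exists i : 'I_N, i%:R <= u <= i.+1%:R.
Proof.
move=> N_gt0 /andP [u_ge0 u_le]; case: (ltrP u N%:R) => [u_lt | u_ge].
  have /andP [tu ut] := truncn_itv u_ge0.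
  have lt_tN : (Num.truncn u < N)%N by rewrite -(ltr_nat R); apply: le_lt_trans u_lt.
  by exists (Ordinal lt_tN); rewrite tu ltW.
have lt_pN : (N.-1 < N)%N by rewrite ltn_predL.
have -> : u = N%:R by apply/eqP; rewrite eq_le u_le u_ge.
by exists (Ordinal lt_pN); rewrite /= prednK // lexx ler_nat leq_pred.
Qed.

Lemma exists_grid_cell (L t : R) (N : nat) : 0 < L -> (0 < N)%N -> `|t| <= L ->
  exists i : 'I_N,
    - L + i%:R * grid_step L N <= t <= - L + i.+1%:R * grid_step L N.
Proof.
move=> L_gt0 N_gt0; rewrite ler_norml => /andP [Lt tL].
set h := grid_step L N.
have h_gt0 : 0 < h by rewrite divr_gt0 ?ltr0n // mulr_gt0.
have Nh : N%:R * h = 2 * L by rewrite /h /grid_step mulrC divfK // pnatr_eq0 -lt0n.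
have uh : (t + L) / h * h = t + L by rewrite divfK ?gt_eqF.
have [|i /andP [iu ui]] := @exists_unit_cell N ((t + L) / h) N_gt0.
  by rewrite divr_ge0 ?ler_pdivrMr /= ?Nh; lra.
by exists i; apply/andP; split; nra.
Qed.

Section LipschitzGraph.
Variables (s : C) (f : (C -> R) -> R) (lam : R).
Hypothesis f_lip : forall x y d, 0 <= d ->
  (forall k, k != s -> `|x k - y k| <= d) -> `|f x - f y| <= lam * d.

Lemma lipschitz_const_ge0 : 0 <= lam.
Proof.
rewrite -[lam]mulr1; apply: le_trans (f_lip (x := fun=> 0) (y := fun=> 0) ler01 _).
  exact: normr_ge0.
by move=> k _; rewrite subrr normr0.
Qed.

(* The grid runs over all coordinates, but only the cells with [g s = 0] carry
   a box: its [s]-side is the interval of radius [lam * h] around the value of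
   [f] at the cell corner.  The other cells are degenerate. *)
Definition graph_box_lo L N (g : {ffun C -> 'I_N}) k : R :=
  if k == s then
    (if val (g s) == 0%N then f (grid_corner L g) - lam * grid_step L N else 0)
  else grid_corner L g k.

Definition graph_box_hi L N (g : {ffun C -> 'I_N}) k : R :=
  if k == s then
    (if val (g s) == 0%N then f (grid_corner L g) + lam * grid_step L N else 0)
  else grid_corner L g k + grid_step L N.

Lemma graph_box_vol L N : (0 < N)%N ->
  \sum_(g : {ffun C -> 'I_N}) box_vol (graph_box_lo L g) (graph_box_hi L g)
    = 2 * lam * grid_step L N * \prod_(k | k != s) (2 * L).
Proof.
move=> N_gt0; set h := grid_step L N.
pose W k (i : 'I_N) := if k == s then (if val i == 0%N then 2 * lam * h else 0) else h.
have vol_eq (g : {ffun C -> 'I_N}) :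
    box_vol (graph_box_lo L g) (graph_box_hi L g) = \prod_k W k (g k).
  apply: eq_bigr => k _; rewrite /graph_box_lo /graph_box_hi /W.
  by case: eqP => [-> | _]; [case: eqP => _ |]; rewrite -/h; lra.
rewrite (eq_bigr _ (fun g _ => vol_eq g)) -bigA_distr_bigA (bigD1 s) //=; congr (_ * _).
  rewrite (bigD1 (Ordinal N_gt0)) //= big1 ?addr0 => [|i /eqP i_neq0].
    by rewrite /W eqxx.
  by rewrite /W eqxx; case: eqP => // i0; case: i_neq0; apply: val_inj.
apply: eq_bigr => k /negbTE ks; rewrite /W ks sumr_const card_ord -[_ *+ N]mulr_natl.
by rewrite /h /grid_step mulrC divfK // pnatr_eq0 -lt0n.
Qed.

Lemma graph_box_cover L N x : 0 < L -> (0 < N)%N ->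
  x s = f x -> (forall k, `|x k| <= L) ->
  exists g : {ffun C -> 'I_N}, forall k, graph_box_lo L g k <= x k <= graph_box_hi L g k.
Proof.
move=> L_gt0 N_gt0 xs xL.
have [g0 g0P] := fin_all_exists (fun k => exists_grid_cell L_gt0 N_gt0 (xL k)).
pose g := [ffun k => if k == s then Ordinal N_gt0 else g0 k].
have corner_near k : k != s ->
    grid_corner L g k <= x k <= grid_corner L g k + grid_step L N.
  move=> /negbTE ks; have := g0P k.
  by rewrite /grid_corner ffunE ks -natr1 mulrDl mul1r addrA.
have h_ge0 : 0 <= grid_step L N by rewrite divr_ge0 // mulr_ge0 // ltW.
exists g => k; rewrite /graph_box_lo /graph_box_hi.
case: eqP => [-> | /eqP ks]; last exact: corner_near.
rewrite ffunE eqxx /= xs.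
have : `|f x - f (grid_corner L g)| <= lam * grid_step L N.
  apply: f_lip h_ge0 _ => j js; have /andP [? ?] := corner_near j js.
  by rewrite ler_norml; apply/andP; split; lra.
by rewrite ler_norml => /andP [? ?]; apply/andP; split; lra.
Qed.

Lemma box_null_graph_bounded L : 0 < L ->
  box_null (fun x => x s = f x /\ forall k, `|x k| <= L).
Proof.
move=> L_gt0; apply: (box_null_finite_cover s) => eps eps_gt0.
have lam_ge0 := lipschitz_const_ge0.
pose P := \prod_(k | k != s) (2 * L).
have L_ge0 := ltW L_gt0.
have P_ge0 : 0 <= P by apply: prodr_ge0 => k _; rewrite mulr_ge0.
pose N := (Num.bound (4 * lam * L * P / eps)).+1.
have N_gt0 : (0 < N)%N by [].
exists {ffun C -> 'I_N}, (@graph_box_lo L N), (@graph_box_hi L N); split.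
- move=> g k; rewrite /graph_box_lo /graph_box_hi.
  have h_ge0 : 0 <= grid_step L N by rewrite divr_ge0 // mulr_ge0.
  have : 0 <= lam * grid_step L N by rewrite mulr_ge0.
  by case: ifP => _; [case: ifP => _ |]; lra.
- by move=> x [xs xL]; apply: graph_box_cover.
rewrite graph_box_vol // /grid_step.
have -> : 2 * lam * (2 * L / N%:R) * P = 4 * lam * L * P / N%:R.
  by ring.
have bound_ge0 : 0 <= 4 * lam * L * P / eps.
  by rewrite divr_ge0 ?mulr_ge0 // ltW.
rewrite ler_pdivrMr ?ltr0n // -ler_pdivrMl // mulrC.
by apply: le_trans (ltW (archi_boundP bound_ge0)) _; rewrite ler_nat.
Qed.

Lemma box_null_graph : box_null (fun x => x s = f x).
Proof.
apply: box_null_sub (box_null_bigcup s (fun n => box_null_graph_bounded (ltr0Sn R n))).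
by move=> x xs; have [n xn] := exists_nat_norm_bound x; exists n.
Qed.

End LipschitzGraph.

Lemma box_null_hyperplane (s a b c : C) : s != a -> s != b -> s != c ->
  box_null (fun x => x s = x a + x b - x c).
Proof.
move=> sa sb sc; apply: (@box_null_graph s (fun x => x a + x b - x c) 3).
move=> x y d _ xy; have := xy a; have := xy b; have := xy c.
rewrite ![_ == s]eq_sym sa sb sc !ler_norml.
move=> /(_ isT) /andP [? ?] /(_ isT) /andP [? ?] /(_ isT) /andP [? ?].
by apply/andP; split; lra.
Qed.

End BoxNull.

Lemma mem_set_neq0 (T : finType) (A : {set T}) x : x \in A -> A != set0.
Proof. by move=> xA; apply/set0Pn; exists x. Qed.

Section GSClass.
Variables (R : realType) (m : nat).
Implicit Types (x : Defs.coord m -> R) (i j k : 'I_m).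

Definition item_coord i : Defs.coord m := exist _ [set i] (mem_set_neq0 (set11 i)).

Definition pair_coord i j : Defs.coord m :=
  exist _ [set i; j] (mem_set_neq0 (setU11 i [set j])).

Lemma val_ofE x S (S_neq0 : S != set0) : val_of x S = x (exist _ S S_neq0).
Proof. by rewrite /val_of insubT. Qed.

Lemma pair_sum_coord x i j k :
  pair_sum (val_of x) i j k = x (pair_coord i j) + x (item_coord k).
Proof.
by rewrite /pair_sum (val_ofE _ (mem_set_neq0 (setU11 i [set j])))
  (val_ofE _ (mem_set_neq0 (set11 k))).
Qed.

Lemma coord_neq (S T : Defs.coord m) i : i \in val S -> i \notin val T -> S != T.
Proof. by move=> iS; apply: contraNneq => <-. Qed.

Lemma pair_coord_neq_item i j k : i != j -> pair_coord i j != item_coord k.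
Proof.
move=> ij; have [-> | ki] := eqVneq k i.
  by apply: (coord_neq (i := j)); rewrite /= !inE ?eqxx ?orbT // eq_sym.
by apply: (coord_neq (i := i)); rewrite /= !inE ?eqxx // eq_sym.
Qed.

Lemma exists_near_not_GS x i j k : i != j -> i != k -> j != k ->
  pair_sum (val_of x) i k j <= pair_sum (val_of x) i j k ->
  pair_sum (val_of x) j k i <= pair_sum (val_of x) i j k ->
  forall e, 0 < e -> exists y, (forall c, `|y c - x c| < e) /\ ~ GS_class y.
Proof.
move=> ij ik jk le_ikj le_jki e e_gt0.
pose y c := x c + (if c == pair_coord i j then e / 2 else 0).
have y_other c : c != pair_coord i j -> y c = x c.
  by rewrite /y => /negbTE ->; rewrite addr0.
have y_ij : y (pair_coord i j) = x (pair_coord i j) + e / 2 by rewrite /y eqxx.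
have y_item l : y (item_coord l) = x (item_coord l).
  by rewrite y_other // eq_sym pair_coord_neq_item.
have y_pair l : y (pair_coord l k) = x (pair_coord l k).
  apply: y_other; apply: (coord_neq (i := k)); rewrite /= !inE ?eqxx ?orbT //.
  by rewrite negb_or ![k == _]eq_sym ik jk.
exists y; split=> [c | [y_val gs]].
  by rewrite /y addrAC subrr add0r; case: eqP => _; rewrite ?normr0 ?ger0_norm; lra.
apply: (gross_substitutes_split_not_strict_max y_val ij ik jk gs);
  move: le_ikj le_jki; rewrite !pair_sum_coord !y_item !y_pair y_ij; lra.
Qed.

Section ThreeItems.
Variables a b c : 'I_m.
Hypotheses (ab : a != b) (ac : a != c) (bc : b != c).

Lemma GS_class_split_tie x : GS_class x ->
  [\/ x (pair_coord a b) = x (pair_coord a c) + x (item_coord b) - x (item_coord c),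
      x (pair_coord a b) = x (pair_coord b c) + x (item_coord a) - x (item_coord c)
    | x (pair_coord a c) = x (pair_coord b c) + x (item_coord a) - x (item_coord b)].
Proof.
move=> [x_val gs]; have := gross_substitutes_split_tie x_val gs ab ac bc.
rewrite !pair_sum_coord => -[e | e | e];
  [constructor 1 | constructor 2 | constructor 3]; lra.
Qed.

Lemma lebesgue_null_GS_class : lebesgue_null (@GS_class R m).
Proof.
have ab_ac : pair_coord a b != pair_coord a c.
  by apply: (coord_neq (i := b)); rewrite /= !inE ?eqxx ?orbT // negb_or eq_sym ab bc.
have ab_bc : pair_coord a b != pair_coord b c.
  by apply: (coord_neq (i := a)); rewrite /= !inE ?eqxx // negb_or ab ac.
have ac_bc : pair_coord a c != pair_coord b c.
  by apply: (coord_neq (i := a)); rewrite /= !inE ?eqxx // negb_or ab ac.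
have ab_item k : pair_coord a b != item_coord k by apply: pair_coord_neq_item.
have ac_item k : pair_coord a c != item_coord k by apply: pair_coord_neq_item.
change (box_null (@GS_class R m)).
apply: box_null_sub (box_null_setU (pair_coord a b)
  (box_null_hyperplane ab_ac (ab_item b) (ab_item c))
  (box_null_setU (pair_coord a b) (box_null_hyperplane ab_bc (ab_item a) (ab_item c))
    (box_null_hyperplane ac_bc (ac_item a) (ac_item b)))).
by move=> x /GS_class_split_tie [] e; [left | right; left | right; right].
Qed.

Lemma empty_interior_GS_class : empty_interior (@GS_class R m).
Proof.
move=> x _; set v := val_of x.
have [ba ca cb] : [/\ b != a, c != a & c != b] by rewrite ![_ == a]eq_sym ab ac eq_sym.
case: (max3_cases (pair_sum v a b c) (pair_sum v a c b) (pair_sum v b c a)).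
- by move=> [le_acb le_bca]; apply: exists_near_not_GS ab ac bc le_acb le_bca.
- move=> [le_abc le_bca]; apply: exists_near_not_GS ac ab cb le_abc _.
  by rewrite (pair_sumC v b c a).
- move=> [le_abc le_acb]; apply: exists_near_not_GS bc ba ca _ _.
  + by rewrite (pair_sumC v a b c).
  + by rewrite (pair_sumC v a c b).
Qed.

End ThreeItems.
End GSClass.

Theorem theorem7 (R : realType) (m : nat) : (3 <= m)%N ->
  lebesgue_null (@GS_class R m) /\ empty_interior (@GS_class R m).
Proof.
move=> m3.
pose a : 'I_m := Ordinal (leq_trans (isT : (0 < 3)%N) m3).
pose b : 'I_m := Ordinal (leq_trans (isT : (1 < 3)%N) m3).
pose c : 'I_m := Ordinal (leq_trans (isT : (2 < 3)%N) m3).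
have [ab ac bc] : [/\ a != b, a != c & b != c] by [].
split; [exact: lebesgue_null_GS_class ab ac bc | exact: empty_interior_GS_class ab ac bc].
Qed.
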